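(* Let $R$ be an integral domain whose Jacobson radical is $\{0\}$, let $X=\operatorname{Specm}(R)$ and for $r\in R$ let $X_r=\{\mathfrak m\in X : r\notin\mathfrak m\}$. Then $\mathcal F=\{Z\subseteq X : X_r\subseteq Z \text{ for some } r\in R\setminus\{0\}\}$ is a filter on $X$. Moreover, if $\mathcal U$ is an ultrafilter on $X$ containing $\mathcal F$, then the canonical map $R\to\prod_{\mathcal U}R/\mathfrak m$ is injective, and the field $\prod_{\mathcal U}R/\mathfrak m$ contains (a copy of) the fraction field of $R$.
   Context: A filter on a set $X$ is a collection $\mathcal F$ of subsets of $X$ with $\emptyset\notin\mathcal F$, closed under finite intersections and under passing to supersets; an ultrafilter is a maximal filter. For a nonempty filter $\mathcal F$ on $X$ and commutative rings $S_i$ ($i\in X$), $\prod_{\mathcal F}S_i$ is the quotient of $\prod_{i\in X}S_i$ by the ideal of families $(s_i)$ with $\{i : s_i=0\}\in\mathcal F$; if all $S_i$ are fields and $\mathcal F$ is an ultrafilter this is a field. The canonical map $R\to\prod_{\mathcal U}R/\mathfrak m$ sends $r$ to the class of $(r \bmod \mathfrak m)_{\mathfrak m\in X}$. *)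

From HB Require Import structures.
From mathcomp Require Import all_boot all_order all_algebra.
Set Implicit Arguments. Unset Strict Implicit. Unset Printing Implicit Defensive.
Import Order.TTheory GRing.Theory Num.Theory.
Local Open Scope ring_scope.

Definition is_ideal (R : comPzRingType) (I : R -> Prop) : Prop :=
  [/\ I 0, (forall x y, I x -> I y -> I (x + y)) & (forall r x, I x -> I (r * x))].

Definition maximal_ideal (R : comPzRingType) (m : R -> Prop) : Prop :=
  [/\ is_ideal m, ~ m 1 &
      forall J : R -> Prop, is_ideal J -> ~ J 1 -> (forall x, m x -> J x) ->
        forall x, J x -> m x].

Definition Specm (R : comPzRingType) : Type := {m : R -> Prop | maximal_ideal m}.

Definition jacobson_trivial (R : comPzRingType) : Prop :=
  forall r : R, (forall m : Specm R, proj1_sig m r) -> r = 0.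

Definition Xr (R : comPzRingType) (r : R) : Specm R -> Prop :=
  fun m => ~ proj1_sig m r.

Definition is_filter (X : Type) (F : (X -> Prop) -> Prop) : Prop :=
  [/\ F (fun _ => True),
      ~ F (fun _ => False),
      (forall A B, F A -> F B -> F (fun x => A x /\ B x)) &
      (forall A B, F A -> (forall x, A x -> B x) -> F B)].

Definition is_ultrafilter (X : Type) (U : (X -> Prop) -> Prop) : Prop :=
  is_filter U /\
  forall G, is_filter G -> (forall A, U A -> G A) -> forall A, G A -> U A.

Definition Ffilter (R : comPzRingType) : (Specm R -> Prop) -> Prop :=
  fun Z => exists r : R, r <> 0 /\ (forall m, Xr r m -> Z m).

(* An element of prod_m R/m is represented by a
   family of representatives f : Specm R -> R (f m is a representative of the
   m-th component in R/m).  Two families define the same element of prod_U R/m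
   iff {m | f m - g m \in m} \in U, i.e. iff their difference lies in the ideal
   of families vanishing on a U-large set.  Ring operations are pointwise. *)
Definition uprod_eq (R : comPzRingType) (U : (Specm R -> Prop) -> Prop)
  (f g : Specm R -> R) : Prop :=
  U (fun m => proj1_sig m (f m - g m)).

Definition canon (R : comPzRingType) (r : R) : Specm R -> R := fun _ => r.

Definition uprod_embedding (R : comPzRingType) (U : (Specm R -> Prop) -> Prop)
  (K : nzRingType) (phi : K -> Specm R -> R) : Prop :=
  [/\ uprod_eq U (phi 1) (fun _ => 1),
      (forall a b, uprod_eq U (phi (a + b)) (fun m => phi a m + phi b m)),
      (forall a b, uprod_eq U (phi (a * b)) (fun m => phi a m * phi b m)) &
      (forall a b, uprod_eq U (phi a) (phi b) -> a = b)].

(* Modulo a maximal ideal m every b outside m is invertible, so a fraction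
   a/b of R has a residue a * b^-1 in R/m as soon as b is not in m.  Choosing
   these residues gives a map from the fraction field to prod_m R/m; every
   identity between fractions holds in R/m at all m avoiding the finitely
   many denominators involved, i.e. on a set X_r with r <> 0, which belongs
   to U.  Conversely, if two residue families agree on a U-large set, the
   cross-multiplied difference d of the fractions lies in U-almost every m;
   since X_d is U-large too and U is proper, d = 0.  This gives the
   injectivity of both maps, and the triviality of the Jacobson radical is
   exactly what makes F proper. *)
From HB Require Import structures.
From mathcomp Require Import all_boot all_order all_algebra.
From mathcomp Require Import ring.
From Stdlib Require Import Classical ClassicalEpsilon.
Set Implicit Arguments. Unset Strict Implicit. Unset Printing Implicit Defensive.
Import GRing.Theory.
Local Open Scope ring_scope.

Local Notation "x %:F" := (@FracField.tofrac _ x).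

Section Ideals.
Variables (R : comPzRingType) (I : R -> Prop).
Hypothesis idealI : is_ideal I.

Lemma ideal0 : I 0.
Proof. by case: idealI. Qed.

Lemma idealD x y : I x -> I y -> I (x + y).
Proof. by case: idealI => _ + _; apply. Qed.

Lemma idealMl r x : I x -> I (r * x).
Proof. by case: idealI => _ _; apply. Qed.

Lemma idealMr x r : I x -> I (x * r).
Proof. by rewrite mulrC; apply: idealMl. Qed.

Lemma ideal_notinMl x y : ~ I (x * y) -> ~ I x.
Proof. by move=> nIxy Ix; apply/nIxy/idealMr. Qed.

Lemma ideal_notinMr x y : ~ I (x * y) -> ~ I y.
Proof. by move=> nIxy Iy; apply/nIxy/idealMl. Qed.

Lemma ideal_residueD u v a b c d : I (u * b - a) -> I (v * d - c) ->
  I ((u + v) * (b * d) - (a * d + c * b)).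
Proof.
move=> Iu Iv; have -> : (u + v) * (b * d) - (a * d + c * b) =
  (u * b - a) * d + (v * d - c) * b by ring.
by apply: idealD; apply: idealMr.
Qed.

Lemma ideal_residueM u v a b c d : I (u * b - a) -> I (v * d - c) ->
  I ((u * v) * (b * d) - (a * c)).
Proof.
move=> Iu Iv; have -> : (u * v) * (b * d) - a * c =
  (u * b - a) * (v * d) + a * (v * d - c) by ring.
by apply: idealD; [apply: idealMr | apply: idealMl].
Qed.

End Ideals.

Section MaximalIdeals.
Variables (R : comPzRingType) (I : R -> Prop).

Definition inv_mod (b : R) : R := epsilon (inhabits 0) (fun c => I (b * c - 1)).

Hypothesis maxI : maximal_ideal I.

Let idealI : is_ideal I. Proof. by case: maxI. Qed.

Lemma inv_modP b : ~ I b -> I (b * inv_mod b - 1).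
Proof.
move=> nIb; apply: (epsilon_spec (inhabits 0) (fun c => I (b * c - 1))).
pose J x := exists r y, I y /\ x = r * b + y.
have idealJ : is_ideal J.
  split.
  - by exists 0, 0; split; [exact: ideal0 | ring].
  - move=> _ _ [r [y [Iy ->]]] [r' [y' [Iy' ->]]].
    by exists (r + r'), (y + y'); split; [exact: idealD | ring].
  - move=> s _ [r [y [Iy ->]]].
    by exists (s * r), (s * y); split; [exact: idealMl | ring].
(* [J = I + R b] contains [I], so by maximality it is either [I] or [R]. *)
have [[r [y [Iy e1]]] | nJ1] := classic (J 1).
  exists r; have -> : b * r - 1 = - 1 * y by rewrite [X in _ - X]e1; ring.
  exact: idealMl.
case: maxI => _ _ /(_ J idealJ nJ1) maxJ; exfalso; apply: nIb; apply: maxJ.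
  by move=> x Ix; exists 0, x; split => //; ring.
by exists 1, 0; split; [exact: ideal0 | ring].
Qed.

Lemma maximal_ideal_cancel b x : ~ I b -> I (x * b) -> I x.
Proof.
move=> nIb Ixb; have -> : x = (- x) * (b * inv_mod b - 1) + (x * b) * inv_mod b
  by ring.
by apply: (idealD idealI); [apply/(idealMl idealI)/inv_modP | apply: idealMr].
Qed.

(* [u] and [v] are the residues of [a/b] and [c/d] in [R/I]. *)
Lemma maximal_residue_eq u v a b c d : ~ I b -> ~ I d ->
  I (u * b - a) -> I (v * d - c) -> I (u - v) <-> I (a * d - c * b).
Proof.
move=> nIb nId Iu Iv.
have cross : (u - v) * (b * d) =
  (a * d - c * b) + (u * b - a) * d + (v * d - c) * (- b) by ring.
split=> [Iuv | Iad].
  have -> : a * d - c * b =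
    (u - v) * (b * d) + (u * b - a) * (- d) + (v * d - c) * b by ring.
  by apply: (idealD idealI); [apply: (idealD idealI)|]; apply: (idealMr idealI).
apply: (maximal_ideal_cancel nIb); apply: (maximal_ideal_cancel nId).
rewrite -mulrA cross; apply: (idealD idealI); [apply: (idealD idealI) => //|].
all: exact: (idealMr idealI).
Qed.

End MaximalIdeals.

Lemma specm_ideal (R : comPzRingType) (m : Specm R) : is_ideal (proj1_sig m).
Proof. by case: (proj2_sig m). Qed.

Lemma XrMl (R : comPzRingType) (r s : R) m : Xr (r * s) m -> Xr r m.
Proof. exact/ideal_notinMl/specm_ideal. Qed.

Lemma XrMr (R : comPzRingType) (r s : R) m : Xr (r * s) m -> Xr s m.
Proof. exact/ideal_notinMr/specm_ideal. Qed.

Section Filters.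
Variables (X : Type) (U : (X -> Prop) -> Prop).
Hypothesis filterU : is_filter U.

Lemma filterS (A B : X -> Prop) : U A -> (forall x, A x -> B x) -> U B.
Proof. by case: filterU => _ _ _; apply. Qed.

Lemma filter_app2 (A B C : X -> Prop) :
  U A -> U B -> (forall x, A x -> B x -> C x) -> U C.
Proof.
case: filterU => _ _ UI _ UA UB ABC.
by apply: filterS (UI _ _ UA UB) _ => x [Ax Bx]; apply: ABC.
Qed.

End Filters.

Lemma Ffilter_is_filter (R : idomainType) :
  jacobson_trivial R -> is_filter (@Ffilter R).
Proof.
move=> jacR; split.
- by exists 1; split => //; apply/eqP; exact: oner_neq0.
- case=> r [/eqP nr0 Xr0]; move: nr0; rewrite (jacR r) ?eqxx // => m.
  by apply: NNPP => /Xr0.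
- move=> A B [r [/eqP nr0 XrA]] [s [/eqP ns0 XsB]].
  exists (r * s); split; first by apply/eqP; rewrite mulf_neq0.
  by move=> m Xrs; split; [apply/XrA/XrMl/Xrs | apply/XsB/XrMr/Xrs].
- by move=> A B [r [nr0 XrA]] AB; exists r; split=> // m /XrA /AB.
Qed.

Section FractionResidues.
Variable R : idomainType.

Definition frac_num (x : {fraction R}) : R := (frac (repr x)).1.
Definition frac_den (x : {fraction R}) : R := (frac (repr x)).2.

Lemma frac_den_neq0 x : frac_den x != 0.
Proof. exact: denom_ratioP. Qed.

Lemma frac_numden x : x = (frac_num x)%:F / (frac_den x)%:F.
Proof.
apply: (canRL (mulfK _)); first by rewrite tofrac_eq0 frac_den_neq0.
rewrite /frac_num /frac_den -{1}(reprK x); unlock FracField.tofrac.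
rewrite -[LHS]FracField.pi_mul; apply/eqmodP.
rewrite /= FracField.equivfE /FracField.mulf /=.
rewrite !numden_Ratio ?oner_neq0 ?mulf_neq0 ?oner_neq0 ?denom_ratioP //.
by rewrite !mulr1 mulrC.
Qed.

Lemma tofrac_div_eq (a b c d : R) : b != 0 -> d != 0 ->
  (a%:F / b%:F = c%:F / d%:F) <-> a * d = c * b.
Proof.
move=> nb0 nd0; have eq_div := @eqr_div _ a%:F b%:F c%:F d%:F.
rewrite -!tofracM !tofrac_eq0 tofrac_eq in eq_div.
split=> [/eqP | e]; first by rewrite eq_div // => /eqP.
by apply/eqP; rewrite eq_div // e.
Qed.

Definition represents (f : Specm R -> R) (x : {fraction R}) : Prop :=
  exists a b, [/\ b != 0, x = a%:F / b%:F &
    forall m : Specm R, Xr b m -> proj1_sig m (f m * b - a)].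

Lemma represents_canon (r : R) : represents (canon r) r%:F.
Proof.
exists r, 1; split; [exact: oner_neq0 | by rewrite tofrac1 divr1 |].
by move=> m _; rewrite /canon mulr1 subrr; apply: ideal0 (specm_ideal m).
Qed.

Lemma representsD f g x y : represents f x -> represents g y ->
  represents (fun m => f m + g m) (x + y).
Proof.
case=> [a [b [nb0 -> fx]]] [c [d [nd0 -> gy]]].
exists (a * d + c * b), (b * d); split; first by rewrite mulf_neq0.
  by rewrite tofracD !tofracM addf_div // tofrac_eq0.
move=> m Xbd /=.
exact (ideal_residueD (specm_ideal m) (fx m (XrMl Xbd)) (gy m (XrMr Xbd))).
Qed.

Lemma representsM f g x y : represents f x -> represents g y ->
  represents (fun m => f m * g m) (x * y).
Proof.
case=> [a [b [nb0 -> fx]]] [c [d [nd0 -> gy]]].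
exists (a * c), (b * d); split; first by rewrite mulf_neq0.
  by rewrite !tofracM mulf_div.
move=> m Xbd /=.
exact (ideal_residueM (specm_ideal m) (fx m (XrMl Xbd)) (gy m (XrMr Xbd))).
Qed.

Definition frac_residue (x : {fraction R}) (m : Specm R) : R :=
  frac_num x * inv_mod (proj1_sig m) (frac_den x).

Lemma represents_frac_residue x : represents (frac_residue x) x.
Proof.
exists (frac_num x), (frac_den x).
split; [exact: frac_den_neq0 | exact: frac_numden |].
move=> m Xm; have -> : frac_residue x m * frac_den x - frac_num x =
  frac_num x * (frac_den x * inv_mod (proj1_sig m) (frac_den x) - 1)
  by rewrite /frac_residue; ring.
exact/(idealMl (specm_ideal m))/(inv_modP (proj2_sig m)).
Qed.

Section Ultraproduct.
Variable U : (Specm R -> Prop) -> Prop.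
Hypotheses (filterU : is_filter U) (FU : forall Z, Ffilter Z -> U Z).

Lemma filter_Xr (r : R) : r != 0 -> U (Xr r).
Proof. by move=> /eqP nr0; apply: FU; exists r. Qed.

Lemma filter_ideal_eq0 (d : R) : U (fun m => proj1_sig m d) -> d = 0.
Proof.
have [// | nd0 Ud] := eqVneq d 0; have [_ UF _ _] := filterU.
by exfalso; apply/UF/(filter_app2 filterU Ud (filter_Xr nd0)) => m md; apply.
Qed.

Lemma represents_uprod_eq f g x y : represents f x -> represents g y ->
  uprod_eq U f g <-> x = y.
Proof.
case=> [a [b [nb0 -> fx]]] [c [d [nd0 -> gy]]].
rewrite tofrac_div_eq //; have Ubd := filter_Xr (mulf_neq0 nb0 nd0).
have residue_eq m : Xr (b * d) m ->
    proj1_sig m (f m - g m) <-> proj1_sig m (a * d - c * b).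
  move=> Xbd; have Xb := XrMl Xbd; have Xd := XrMr Xbd.
  exact (maximal_residue_eq (proj2_sig m) Xb Xd (fx m Xb) (gy m Xd)).
split=> [Ufg | e].
  apply/eqP; rewrite -subr_eq0; apply/eqP/filter_ideal_eq0.
  by apply: (filter_app2 filterU Ufg Ubd) => m fgm /residue_eq <-.
apply: (filterS filterU Ubd) => m /residue_eq ->.
by rewrite e subrr; apply: ideal0 (specm_ideal m).
Qed.

Lemma canon_uprod_inj r s : uprod_eq U (canon r) (canon s) -> r = s.
Proof.
move/(represents_uprod_eq (represents_canon r) (represents_canon s))/eqP.
by rewrite tofrac_eq => /eqP.
Qed.

Lemma frac_residue_tofrac r : uprod_eq U (frac_residue r%:F) (canon r).
Proof.
exact/(represents_uprod_eq (represents_frac_residue _) (represents_canon r)).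
Qed.

Lemma frac_residue_embedding : uprod_embedding U frac_residue.
Proof.
have resP := represents_frac_residue; split.
- by apply/(represents_uprod_eq (resP 1) (represents_canon 1)); rewrite tofrac1.
- move=> x y; have sumP := representsD (resP x) (resP y).
  exact/(represents_uprod_eq (resP _) sumP).
- move=> x y; have prodP := representsM (resP x) (resP y).
  exact/(represents_uprod_eq (resP _) prodP).
- by move=> x y /(represents_uprod_eq (resP x) (resP y)).
Qed.

End Ultraproduct.

End FractionResidues.

Theorem proposition1p1 (R : idomainType) (hJ : jacobson_trivial R) :
  is_filter (@Ffilter R) /\
  forall U : (Specm R -> Prop) -> Prop,
    is_ultrafilter U -> (forall Z, @Ffilter R Z -> U Z) ->
    (forall r s : R, uprod_eq U (canon r) (canon s) -> r = s) /\
    exists phi : {fraction R} -> Specm R -> R,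
      uprod_embedding U phi /\
      forall r : R, uprod_eq U (phi (FracField.tofrac r)) (canon r).
Proof.
split; first exact: Ffilter_is_filter.
move=> U [filterU _] FU; split; first exact: canon_uprod_inj filterU FU.
exists (@frac_residue R).
by split; [exact: frac_residue_embedding | exact: frac_residue_tofrac].
Qed.
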